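(* Let $T$ be a pre-truss and $P$ a non-empty normal sub-heap of $T$. Then $P$ is a paragon if and only if, for all $a,b\in T$ and $p,e\in P$, $$[a[p,e,b],ab,e]\in P\quad\text{and}\quad[[p,e,b]a,ba,e]\in P.$$
   Context: A heap is a set with a ternary operation $[-,-,-]$ satisfying $[a_1,a_2,[a_3,a_4,a_5]]=[[a_1,a_2,a_3],a_4,a_5]$ and $[a,a,b]=b=[b,a,a]$. A normal sub-heap is a non-empty subset $S$ closed under $[-,-,-]$ with $[[a,e,s],a,e]\in S$ for all $a$ in the heap and $e,s\in S$; $a\sim_S b$ iff $[a,b,s]\in S$ for some (equivalently all) $s\in S$. A pre-truss is a heap with an associative binary operation (juxtaposition). A sub-heap $S$ of $T$ is left-closed if $[ts',ts,s]\in S$ for all $s,s'\in S$, $t\in T$, right-closed if $[s't,st,s]\in S$ for all such, and closed if both. A paragon is a non-empty normal sub-heap $P$ such that every equivalence class of $\sim_P$ is a closed sub-heap of $T$. *)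

(* [h a b c] stands for the heap bracket [a,b,c]. *)
Definition is_heap {T : Type} (h : T -> T -> T -> T) : Prop :=
  (forall a1 a2 a3 a4 a5 : T,
      h a1 a2 (h a3 a4 a5) = h (h a1 a2 a3) a4 a5) /\
  (forall a b : T, h a a b = b /\ h b a a = b).

(* A pre-truss: a heap with an associative binary operation [m]
   (juxtaposition: [m a b] is "ab"). *)
Definition is_pretruss {T : Type} (h : T -> T -> T -> T) (m : T -> T -> T) : Prop :=
  is_heap h /\ (forall a b c : T, m a (m b c) = m (m a b) c).

Definition sub_heap {T : Type} (h : T -> T -> T -> T) (S : T -> Prop) : Prop :=
  forall x y z : T, S x -> S y -> S z -> S (h x y z).

Definition normal_subheap {T : Type} (h : T -> T -> T -> T) (S : T -> Prop) : Prop :=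
  (exists s : T, S s) /\ sub_heap h S /\
  (forall a e s : T, S e -> S s -> S (h (h a e s) a e)).

Definition heap_rel {T : Type} (h : T -> T -> T -> T) (S : T -> Prop) (a b : T) : Prop :=
  exists s : T, S s /\ S (h a b s).

Definition left_closed {T : Type} (h : T -> T -> T -> T) (m : T -> T -> T)
  (S : T -> Prop) : Prop :=
  forall s s' t : T, S s -> S s' -> S (h (m t s') (m t s) s).

Definition right_closed {T : Type} (h : T -> T -> T -> T) (m : T -> T -> T)
  (S : T -> Prop) : Prop :=
  forall s s' t : T, S s -> S s' -> S (h (m s' t) (m s t) s).

Definition closed_subheap {T : Type} (h : T -> T -> T -> T) (m : T -> T -> T)
  (S : T -> Prop) : Prop :=
  sub_heap h S /\ left_closed h m S /\ right_closed h m S.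

Definition paragon {T : Type} (h : T -> T -> T -> T) (m : T -> T -> T)
  (P : T -> Prop) : Prop :=
  normal_subheap h P /\
  (forall a : T, closed_subheap h m (fun x => heap_rel h P a x)).

From Stdlib Require Import Setoid.

(* For any sub-heap P, [a ~_P b] is an equivalence relation, [x ~_P y] holds
   iff [[x,y,b] ~_P b], and [x ~_P b] holds iff [x = [p,e,b]] with [p] in P
   (for a fixed [e] in P). Hence the classes of [~_P] are left closed exactly
   when [~_P] is compatible with left multiplication, which in turn is the
   first condition; symmetrically on the right, using the opposite product. *)

Section HeapLaws.
Context {T : Type} {h : T -> T -> T -> T} (heap_h : is_heap h).

Lemma heap_assoc a b c d e : h (h a b c) d e = h a b (h c d e).
Proof. symmetry; apply (proj1 heap_h). Qed.

Lemma heap_cancel_l a b : h a a b = b.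
Proof. apply (proj2 heap_h). Qed.

Lemma heap_cancel_r a b : h b a a = b.
Proof. apply (proj2 heap_h). Qed.

Lemma heap_bracket_cancel x y s : h (h x y s) s y = x.
Proof. now rewrite heap_assoc, heap_cancel_l, heap_cancel_r. Qed.

Lemma heap_swap_mid a b c d e : h a (h b c d) e = h a d (h c b e).
Proof.
  assert (cancel_mid : h c b (h b c d) = d)
    by now rewrite <- heap_assoc, heap_cancel_r, heap_cancel_l.
  rewrite <- (heap_cancel_l (h b c d) e) at 2.
  now rewrite <- (heap_assoc c b), cancel_mid, <- heap_assoc, heap_cancel_r.
Qed.

End HeapLaws.

Section HeapRelation.
Context {T : Type} {h : T -> T -> T -> T} (heap_h : is_heap h).
Context {P : T -> Prop} (sub_P : sub_heap h P).

Lemma heap_rel_iff e a b : P e -> heap_rel h P a b <-> P (h a b e).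
Proof.
  intros Pe; split.
  - intros [s [Ps Pabs]].
    rewrite <- (heap_cancel_l heap_h s e), <- (heap_assoc heap_h).
    now apply sub_P.
  - now exists e.
Qed.

Lemma heap_rel_refl e a : P e -> heap_rel h P a a.
Proof. intros Pe; exists e; now rewrite (heap_cancel_l heap_h). Qed.

Lemma heap_rel_sym a b : heap_rel h P a b -> heap_rel h P b a.
Proof.
  intros [e [Pe Pabe]]; exists e; split; [exact Pe|].
  rewrite <- (heap_cancel_l heap_h e (h b a e)), <- (heap_swap_mid heap_h).
  now apply sub_P.
Qed.

Lemma heap_rel_trans a b c :
  heap_rel h P a b -> heap_rel h P b c -> heap_rel h P a c.
Proof.
  intros [e [Pe Pabe]] Rbc; exists e; split; [exact Pe|].
  apply (heap_rel_iff e) in Rbc; [|exact Pe].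
  replace (h a c e) with (h (h a b e) e (h b c e)).
  - now apply sub_P.
  - now rewrite (heap_assoc heap_h), (heap_cancel_l heap_h), <- (heap_assoc heap_h),
      (heap_cancel_r heap_h).
Qed.

Lemma heap_rel_bracket x y b : heap_rel h P (h x y b) b <-> heap_rel h P x y.
Proof.
  unfold heap_rel.
  now setoid_rewrite (heap_assoc heap_h); setoid_rewrite (heap_cancel_l heap_h).
Qed.

Lemma heap_rel_class_sub_heap a : sub_heap h (heap_rel h P a).
Proof.
  intros x y z Rx Ry Rz.
  apply (heap_rel_trans _ z); [exact Rz|].
  apply heap_rel_sym, heap_rel_bracket.
  apply (heap_rel_trans _ a); [apply heap_rel_sym|]; assumption.
Qed.

Definition left_compatible (R : T -> T -> Prop) (m : T -> T -> T) : Prop :=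
  forall t x y, R x y -> R (m t x) (m t y).

Lemma left_closed_classes_iff m :
  (forall a, left_closed h m (heap_rel h P a)) <-> left_compatible (heap_rel h P) m.
Proof.
  split.
  - intros classes_closed t x y Rxy.
    assert (Ry : heap_rel h P y y) by (destruct Rxy as [e [Pe _]]; exact (heap_rel_refl e y Pe)).
    apply heap_rel_bracket with (b := y), heap_rel_sym.
    apply (classes_closed y); [exact Ry | now apply heap_rel_sym].
  - intros compat a s s' t Rs Rs'.
    apply (heap_rel_trans _ s); [exact Rs|].
    apply heap_rel_sym, heap_rel_bracket, compat.
    apply (heap_rel_trans _ a); [apply heap_rel_sym|]; assumption.
Qed.

Lemma left_compatible_iff m :
  left_compatible (heap_rel h P) m <->
  (forall a b p e, P p -> P e -> P (h (m a (h p e b)) (m a b) e)).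
Proof.
  split.
  - intros compat a b p e Pp Pe.
    apply (heap_rel_iff e); [exact Pe|].
    apply compat, heap_rel_bracket, (heap_rel_iff e); [exact Pe|].
    now rewrite (heap_cancel_r heap_h).
  - intros cond t x y [s [Ps Pxys]].
    apply (heap_rel_iff s); [exact Ps|].
    rewrite <- (heap_bracket_cancel heap_h x y s) at 1.
    now apply cond.
Qed.

End HeapRelation.

(* [right_closed h m] is convertible to [left_closed h (opposite m)]. *)
Definition opposite {T : Type} (m : T -> T -> T) (x y : T) : T := m y x.

Theorem lemma3p11 (T : Type) (h : T -> T -> T -> T) (m : T -> T -> T)
  (HT : is_pretruss h m) (P : T -> Prop) (HP : normal_subheap h P) :
  paragon h m P <->
  (forall a b p e : T, P p -> P e ->
     P (h (m a (h p e b)) (m a b) e) /\ P (h (m (h p e b) a) (m b a) e)).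
Proof.
  destruct HT as [heap_h _].
  assert (sub_P : sub_heap h P) by apply HP.
  pose proof (fun m' => left_closed_classes_iff heap_h sub_P m') as closed_iff.
  pose proof (fun m' => left_compatible_iff heap_h sub_P m') as compatible_iff.
  split.
  - intros [_ classes_closed].
    assert (left : left_compatible (heap_rel h P) m)
      by (apply closed_iff; intro a; apply classes_closed).
    assert (right : left_compatible (heap_rel h P) (opposite m))
      by (apply closed_iff; intro a; apply classes_closed).
    intros a b p e Pp Pe; split.
    + now apply compatible_iff.
    + now apply (compatible_iff (opposite m)).
  - intros cond; split; [exact HP|].
    intro a; split; [|split]; revert a.
    + exact (heap_rel_class_sub_heap heap_h sub_P).
    + apply closed_iff, compatible_iff; apply cond.
    + apply (closed_iff (opposite m)), compatible_iff; apply cond.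
Qed.
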